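(* Fix $\omega$ and let $v$ be a blocked path. Define $\hat v(i)=v(i-\delta)+2\delta v'(i-\delta)$ and $\bar v^\delta[i]=\min\{j\in\delta\mathbb{Z}:\ j\ge \hat v(i)-\delta/2\}$ for $i\in\mathbb{Z}$. Let $w$ be the continuous function that is affine on each interval $[i-1+\delta,i+\delta]$, $i\in\mathbb{Z}$, with $w(i+\delta)=\hat v(i)$ for all $i$, and let $\bar w^\delta$ be the analogous function with $\bar w^\delta(i+\delta)=\bar v^\delta[i]$. Then $v\ge w$ and $v+\delta/2\ge \bar w^\delta$ on $\mathbb{R}$.
   Context: Fix $0<\delta\ll1/2$, $F>0$. Let $\mathbb{Z}^*=\mathbb{Z}+\tfrac12$, $b_{i,j}=(i,j)$; $\phi\in C_c^\infty(\mathbb{R}^2)$ nonnegative with support in $[-\delta,\delta]^2$, $\phi_{i,j}(x,s)=\phi((x,s)-b_{i,j})$; $(l(i,j)(\omega))_{(i,j)\in\mathbb{Z}\times\mathbb{Z}^*}$ nonnegative (i.i.d. exponential) random variables. For small $\varepsilon>0$ let $A=\mathbb{R}\setminus\bigcup_{i\in\mathbb{Z}}(i-\delta,i+\delta)$, $A_\varepsilon=\mathbb{R}\setminus\bigcup_{i\in\mathbb{Z}}(i-\delta-\varepsilon,i+\delta+\varepsilon)$, and $\chi_A^\varepsilon$ a smooth function with $\chi_{A_\varepsilon}\le\chi_A^\varepsilon\le\chi_A$. A blocked path is a function $v\in C^1_{loc}(\mathbb{R})$ such that for every $i\in\mathbb{Z}$: $v''(x)=-F\chi_A^\varepsilon(x)$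 on $(i+\delta,i+1-\delta)$ and $v''(x)=\sum_{j\in\mathbb{Z}^*}l(i,j)(\omega)\phi_{i,j}(x,v(x))$ on $(i-\delta,i+\delta)$. *)

From Stdlib Require Import Reals Lra ZArith List ClassicalEpsilon.
From Coquelicot Require Import Coquelicot.
Open Scope R_scope.

Definition indic (P : R -> Prop) (x : R) : R :=
  if excluded_middle_informative (P x) then 1 else 0.

(* A_r = R \ U_{i in Z} (i - r, i + r).  A = A_delta, A_eps = A_(delta+eps). *)
Definition setA (r : R) (x : R) : Prop :=
  forall i : Z, ~ (IZR i - r < x < IZR i + r).

Definition smooth1 (f : R -> R) : Prop := forall (n : nat) (x : R), ex_derive_n f n x.

Fixpoint iter_partial (l : list bool) (g : R -> R -> R) : R -> R -> R :=
  match l with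
  | nil => g
  | b :: l' =>
      let h := iter_partial l' g in
      if b then (fun x s => Derive (fun t => h t s) x)
      else (fun x s => Derive (fun t => h x t) s)
  end.

Definition smooth2 (g : R -> R -> R) : Prop :=
  forall (l : list bool) (x s : R),
    ex_derive (fun t => iter_partial l g t s) x /\
    ex_derive (fun t => iter_partial l g x t) s /\
    continuous (fun p : R * R => iter_partial l g (fst p) (snd p)) (x, s).

Definition sumZ (f : Z -> R) : R :=
  Series (fun n : nat => f (Z.of_nat n)) + Series (fun n : nat => f (- Z.of_nat n - 1)%Z).

(* phi_{i,j}(x,s) = phi((x,s) - (i,j)) with j = k + 1/2 in Z* (k : Z). *)
Definition phi_ij (phi : R -> R -> R) (i k : Z) (x s : R) : R :=
  phi (x - IZR i) (s - (IZR k + /2)).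

(* Blocked path (for fixed omega: l i k stands for l(i, k+1/2)(omega)). *)
Definition blocked_path (delta F : R) (chi : R -> R) (phi : R -> R -> R)
    (l : Z -> Z -> R) (v : R -> R) : Prop :=
  (forall x, ex_derive v x) /\ (forall x, continuous (Derive v) x) /\
  (forall (i : Z) (x : R), IZR i + delta < x < IZR i + 1 - delta ->
     is_derive (Derive v) x (- F * chi x)) /\
  (forall (i : Z) (x : R), IZR i - delta < x < IZR i + delta ->
     is_derive (Derive v) x (sumZ (fun k => l i k * phi_ij phi i k x (v x)))).

Definition vhat (delta : R) (v : R -> R) (i : Z) : R :=
  v (IZR i - delta) + 2 * delta * Derive v (IZR i - delta).

Definition is_min_deltaZ (delta y j : R) : Prop :=
  (exists k : Z, j = delta * IZR k) /\ y <= j /\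
  (forall k : Z, y <= delta * IZR k -> j <= delta * IZR k).

Definition interp_affine (delta : R) (val : Z -> R) (w : R -> R) : Prop :=
  (forall x, continuity_pt w x) /\
  (forall i : Z, exists a b : R, forall x, IZR i - 1 + delta <= x <= IZR i + delta ->
       w x = a * x + b) /\
  (forall i : Z, w (IZR i + delta) = val i).

(** On each gap [(i+δ, i+1-δ)] a blocked path is concave (v'' = -F χ ≤ 0) and on
    each bump [(i-δ, i+δ)] it is convex (v'' is a nonnegative sum).  Hence the
    tangent at [i-δ] lies below v on the bump, which gives [v̂(i) ≤ v(i+δ)], and
    above v on the preceding gap.  On the cell [[i-1+δ, i+δ]] the affine piece of
    w lies below v at the left end and meets the tangent at the right end, so it
    lies below the tangent; the tangent bounds it by v on the bump, and concavity
    does so on the gap.  Finally [v̄[i] ≤ v̂(i) + δ/2] at every node, and affine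
    interpolation preserves this bound. *)

From Stdlib Require Import Reals ZArith Lra Psatz ClassicalEpsilon.
From Coquelicot Require Import Coquelicot.
Open Scope R_scope.

(* [Series] returns [0] on divergent series, so no summability is needed. *)
Lemma Series_nonneg (a : nat -> R) : (forall n, 0 <= a n) -> 0 <= Series a.
Proof.
  intros Ha. unfold Series.
  assert (Hs : forall n, 0 <= sum_n a n).
  { induction n as [|n IH].
    - rewrite sum_O. apply Ha.
    - rewrite sum_Sn. unfold plus; simpl. specialize (Ha (S n)). lra. }
  assert (H := Lim_seq_le_loc (fun _ => 0) (sum_n a) (filter_forall _ Hs)).
  rewrite Lim_seq_const in H.
  destruct (Lim_seq (sum_n a)); simpl in *; lra.
Qed.

Lemma sumZ_nonneg (f : Z -> R) : (forall k, 0 <= f k) -> 0 <= sumZ f.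
Proof.
  intros Hf. unfold sumZ.
  assert (0 <= Series (fun n : nat => f (Z.of_nat n))) by (apply Series_nonneg; auto).
  assert (0 <= Series (fun n : nat => f (- Z.of_nat n - 1)%Z)) by (apply Series_nonneg; auto).
  lra.
Qed.

Lemma le_of_derive_nonneg (f df : R -> R) (a b : R) : a <= b ->
  (forall x, a < x < b -> is_derive f x (df x)) ->
  (forall x, a <= x <= b -> continuity_pt f x) ->
  (forall x, a <= x <= b -> 0 <= df x) -> f a <= f b.
Proof.
  intros Hab Hd Hc Hp.
  destruct (MVT_gen f a b df) as [c [Hc1 Hc2]];
    rewrite ?Rmin_left, ?Rmax_right in * by lra; auto.
  specialize (Hp c Hc1). nra.
Qed.

Lemma affine_le_between (p r x a1 b1 a2 b2 : R) : p <= x <= r ->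
  a1 * p + b1 <= a2 * p + b2 -> a1 * r + b1 <= a2 * r + b2 ->
  a1 * x + b1 <= a2 * x + b2.
Proof.
  intros Hx Hp Hr.
  assert (E : (r - p) * ((a1 - a2) * x + (b1 - b2))
              = (r - x) * ((a1 - a2) * p + (b1 - b2))
                + (x - p) * ((a1 - a2) * r + (b1 - b2))) by ring.
  destruct (Req_dec p r) as [<-|Hpr].
  - replace x with p by lra. exact Hp.
  - assert ((r - x) * ((a1 - a2) * p + (b1 - b2)) <= 0) by nra.
    assert ((x - p) * ((a1 - a2) * r + (b1 - b2)) <= 0) by nra.
    nra.
Qed.

Lemma is_min_deltaZ_le (delta y j : R) : 0 < delta ->
  is_min_deltaZ delta y j -> j <= y + delta.
Proof.
  intros Hd [_ [_ Hmin]].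
  destruct (archimed (y / delta)) as [Hup1 Hup2].
  assert (E : delta * (y / delta) = y) by (field; lra).
  assert (delta * (y / delta) < delta * IZR (up (y / delta)))
    by (apply Rmult_lt_compat_l; lra).
  assert (delta * IZR (up (y / delta)) <= delta * (y / delta + 1))
    by (apply Rmult_le_compat_l; lra).
  assert (j <= delta * IZR (up (y / delta))) by (apply Hmin; lra).
  nra.
Qed.

Section TangentsAndChords.

Variables (v D : R -> R).
Hypothesis v_derive : forall t, is_derive v t (D t).

Let v_continuous t : continuity_pt v t.
Proof.
  apply continuity_pt_filterlim.
  exact (ex_derive_continuous (K := R_AbsRing) (V := R_NormedModule) v t
           (ex_intro _ _ (v_derive t))).
Qed.

Let derive_sub_linear (m : R) t : is_derive (fun s => v s - m * s) t (D t - m).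
Proof.
  apply (is_derive_minus v (fun s => m * s)); [apply v_derive|].
  auto_derive; [exact I | ring].
Qed.

Let sub_linear_le (m a b : R) : a <= b -> (forall t, a <= t <= b -> m <= D t) ->
  v a - m * a <= v b - m * b.
Proof.
  intros Hab Hm.
  apply (le_of_derive_nonneg (fun s => v s - m * s) (fun t => D t - m) a b Hab).
  - intros t _. apply derive_sub_linear.
  - intros t _. apply continuity_pt_minus; [apply v_continuous | reg].
  - intros t Ht. specialize (Hm t Ht). lra.
Qed.

Lemma tangent_le_right (q x : R) : q <= x ->
  (forall t, q <= t <= x -> D q <= D t) -> v q + D q * (x - q) <= v x.
Proof. intros Hqx Hm. assert (H := sub_linear_le (D q) q x Hqx Hm). lra. Qed.

Lemma le_tangent_left (x q : R) : x <= q ->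
  (forall t, x <= t <= q -> D q <= D t) -> v x <= v q + D q * (x - q).
Proof. intros Hxq Hm. assert (H := sub_linear_le (D q) x q Hxq Hm). lra. Qed.

Lemma chord_le_of_Derive_nonincreasing (p q x m c : R) :
  (forall a b, p <= a -> a <= b -> b <= q -> D b <= D a) -> p <= x <= q ->
  m * p + c <= v p -> m * q + c <= v q -> m * x + c <= v x.
Proof.
  intros Hdec Hx Hp Hq.
  destruct (Rle_or_lt (m * x + c) (v x)) as [|Hlt]; [assumption|exfalso].
  destruct (Req_dec x p) as [->|Hxp]; [lra|].
  destruct (Req_dec x q) as [->|Hxq]; [lra|].
  set (g := fun t => v t - m * t).
  assert (Hg : forall a b, exists d, Rmin a b <= d <= Rmax a b /\
                 g b - g a = (D d - m) * (b - a)).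
  { intros a b. apply (MVT_gen g a b (fun t => D t - m)).
    - intros t _. apply derive_sub_linear.
    - intros t _. apply continuity_pt_minus; [apply v_continuous | reg]. }
  destruct (Hg p x) as [d1 [Hd1 E1]]. destruct (Hg x q) as [d2 [Hd2 E2]].
  rewrite Rmin_left, Rmax_right in Hd1, Hd2 by lra.
  assert (D d2 <= D d1) by (apply Hdec; lra).
  unfold g in E1, E2.
  (* [g - c] is [>= 0] at p and q but [< 0] at x: it must fall, then rise *)
  assert (D d1 - m < 0) by nra. assert (D d2 - m > 0) by nra. lra.
Qed.

Lemma affine_le_concave_convex (p q r m c : R) : p <= q <= r ->
  (forall a b, p <= a -> a <= b -> b <= q -> D b <= D a) ->
  (forall a b, q <= a -> a <= b -> b <= r -> D a <= D b) ->
  m * p + c <= v p -> m * r + c = v q + D q * (r - q) ->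
  forall x, p <= x <= r -> m * x + c <= v x.
Proof.
  intros Hpqr Hdec Hinc Hp Hr x Hx.
  assert (Hbelow_tangent : forall y, p <= y <= r -> m * y + c <= D q * y + (v q - D q * q)).
  { intros y Hy. apply (affine_le_between p r); [exact Hy| |lra].
    assert (v p <= v q + D q * (p - q))
      by (apply le_tangent_left; [lra | intros t Ht; apply Hdec; lra]).
    lra. }
  destruct (Rle_or_lt q x) as [Hqx|Hxq].
  - assert (v q + D q * (x - q) <= v x)
      by (apply tangent_le_right; [lra | intros t Ht; apply Hinc; lra]).
    specialize (Hbelow_tangent x Hx). lra.
  - apply (chord_le_of_Derive_nonincreasing p q); [exact Hdec | lra | exact Hp |].
    specialize (Hbelow_tangent q ltac:(lra)). lra.
Qed.

End TangentsAndChords.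

Section BlockedPath.

Variables (delta F : R) (chi : R -> R) (phi : R -> R -> R) (l : Z -> Z -> R) (v : R -> R).
Hypotheses (delta_pos : 0 < delta) (delta_lt_half : delta < /2) (F_nonneg : 0 <= F).
Hypothesis chi_nonneg : forall x, 0 <= chi x.
Hypothesis phi_nonneg : forall x s, 0 <= phi x s.
Hypothesis l_nonneg : forall i k, 0 <= l i k.
Hypothesis v_blocked : blocked_path delta F chi phi l v.

Let Derive_continuity t : continuity_pt (Derive v) t.
Proof. apply continuity_pt_filterlim, (proj1 (proj2 v_blocked)). Qed.

Lemma Derive_nondecreasing_bump (i : Z) a b :
  IZR i - delta <= a -> a <= b -> b <= IZR i + delta -> Derive v a <= Derive v b.
Proof.
  intros Ha Hab Hb.
  destruct v_blocked as [_ [_ [_ Hbump]]].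
  apply (le_of_derive_nonneg (Derive v) (fun t => sumZ (fun k => l i k * phi_ij phi i k t (v t))) a b Hab).
  - intros t Ht. apply Hbump. lra.
  - intros t _. apply Derive_continuity.
  - intros t _. apply sumZ_nonneg. intro k. apply Rmult_le_pos; [apply l_nonneg | apply phi_nonneg].
Qed.

Lemma Derive_nonincreasing_gap (i : Z) a b :
  IZR i + delta <= a -> a <= b -> b <= IZR i + 1 - delta -> Derive v b <= Derive v a.
Proof.
  intros Ha Hab Hb.
  destruct v_blocked as [_ [_ [Hgap _]]].
  enough (- Derive v a <= - Derive v b) by lra.
  apply (le_of_derive_nonneg (fun t => - Derive v t) (fun t => F * chi t) a b Hab).
  - intros t Ht. replace (F * chi t) with (opp (- F * chi t)) by (unfold opp; simpl; ring).
    exact (is_derive_opp (Derive v) t _ (Hgap i t ltac:(lra))).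
  - intros t _. apply continuity_pt_opp, Derive_continuity.
  - intros t _. apply Rmult_le_pos; [exact F_nonneg | apply chi_nonneg].
Qed.

Let v_derive t : is_derive v t (Derive v t).
Proof. apply Derive_correct, (proj1 v_blocked). Qed.

Lemma vhat_le (i : Z) : vhat delta v i <= v (IZR i + delta).
Proof.
  unfold vhat.
  assert (H := tangent_le_right v (Derive v) v_derive (IZR i - delta) (IZR i + delta)
                 ltac:(lra) ltac:(intros t Ht; apply (Derive_nondecreasing_bump i); lra)).
  replace (IZR i + delta - (IZR i - delta)) with (2 * delta) in H by ring. lra.
Qed.

Lemma affine_vhat_le (i : Z) (m c : R) :
  m * (IZR i - 1 + delta) + c = vhat delta v (i - 1) ->
  m * (IZR i + delta) + c = vhat delta v i ->
  forall x, IZR i - 1 + delta <= x <= IZR i + delta -> m * x + c <= v x.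
Proof.
  intros Hp Hr.
  assert (Ep : IZR (i - 1) + delta = IZR i - 1 + delta) by (rewrite minus_IZR; simpl; ring).
  apply (affine_le_concave_convex v (Derive v) v_derive _ (IZR i - delta)).
  - lra.
  - intros a b Ha Hab Hb. apply (Derive_nonincreasing_gap (i - 1)); rewrite ?minus_IZR; simpl; lra.
  - intros a b Ha Hab Hb. apply (Derive_nondecreasing_bump i); lra.
  - rewrite Hp, <- Ep. apply vhat_le.
  - rewrite Hr. unfold vhat. ring.
Qed.

End BlockedPath.

Lemma cell_cover (delta x : R) : exists i : Z, IZR i - 1 + delta <= x <= IZR i + delta.
Proof. exists (up (x - delta)). destruct (archimed (x - delta)). lra. Qed.

Lemma interp_affine_on_cell (delta : R) (val : Z -> R) (w : R -> R) :
  interp_affine delta val w -> forall i : Z, exists m c : R,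
    (forall x, IZR i - 1 + delta <= x <= IZR i + delta -> w x = m * x + c) /\
    m * (IZR i - 1 + delta) + c = val (i - 1)%Z /\ m * (IZR i + delta) + c = val i.
Proof.
  intros [_ [Haff Hval]] i.
  destruct (Haff i) as [m [c Hmc]]. exists m, c.
  assert (Ep : IZR (i - 1) + delta = IZR i - 1 + delta) by (rewrite minus_IZR; simpl; ring).
  split; [exact Hmc|split].
  - rewrite <- Hmc by lra. rewrite <- Ep. apply Hval.
  - rewrite <- Hmc by lra. apply Hval.
Qed.

Lemma interp_affine_le_shift (delta c : R) (val val' : Z -> R) (w w' : R -> R) :
  interp_affine delta val w -> interp_affine delta val' w' ->
  (forall i, val' i <= val i + c) -> forall x, w' x <= w x + c.
Proof.
  intros Hw Hw' Hval x.
  destruct (cell_cover delta x) as [i Hx].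
  destruct (interp_affine_on_cell _ _ _ Hw i) as [m [b [Hmb [Hp Hr]]]].
  destruct (interp_affine_on_cell _ _ _ Hw' i) as [m' [b' [Hmb' [Hp' Hr']]]].
  rewrite Hmb, Hmb', Rplus_assoc by exact Hx.
  apply (affine_le_between _ _ _ m' b' m (b + c) Hx).
  - specialize (Hval (i - 1)%Z). lra.
  - specialize (Hval i). lra.
Qed.

Theorem mainTheorem4 (delta F eps : R) (phi : R -> R -> R) (l : Z -> Z -> R)
    (chi : R -> R) (v w wbar : R -> R) (vbar : Z -> R) :
  0 < delta -> delta < /2 -> 0 < F -> 0 < eps -> delta + eps < /2 ->
  smooth2 phi -> (forall x s, 0 <= phi x s) ->
  (forall x s, ~ (Rabs x <= delta /\ Rabs s <= delta) -> phi x s = 0) ->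
  (forall i k, 0 <= l i k) ->
  smooth1 chi ->
  (forall x, indic (setA (delta + eps)) x <= chi x <= indic (setA delta) x) ->
  blocked_path delta F chi phi l v ->
  (forall i : Z, is_min_deltaZ delta (vhat delta v i - delta / 2) (vbar i)) ->
  interp_affine delta (vhat delta v) w ->
  interp_affine delta vbar wbar ->
  forall x : R, w x <= v x /\ wbar x <= v x + delta / 2.
Proof.
  intros Hd Hd2 HF _ _ _ Hphi _ Hl _ Hchi Hv Hvbar Hw Hwbar x.
  assert (chi_nonneg : forall t, 0 <= chi t).
  { intro t. destruct (Hchi t) as [H _]. unfold indic in H.
    destruct (excluded_middle_informative _); lra. }
  assert (w_le_v : forall t, w t <= v t).
  { intro t. destruct (cell_cover delta t) as [i Ht].
    destruct (interp_affine_on_cell _ _ _ Hw i) as [m [c [Hmc [Hp Hr]]]].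
    rewrite Hmc by exact Ht.
    exact (affine_vhat_le delta F chi phi l v Hd Hd2 (Rlt_le _ _ HF) chi_nonneg Hphi Hl Hv
             i m c Hp Hr t Ht). }
  assert (wbar_le_w : wbar x <= w x + delta / 2).
  { apply (interp_affine_le_shift delta _ (vhat delta v) vbar w wbar Hw Hwbar).
    intro i. assert (H := is_min_deltaZ_le _ _ _ Hd (Hvbar i)). lra. }
  specialize (w_le_v x). split; lra.
Qed.
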